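(* Let $C$ be a closed subset of the complete Riemannian manifold $(M,g)$, let $t,s>0$ and $y\in M$, and define $\varphi_{t,s,y}:M\to\mathbb{R}$ by $\varphi_{t,s,y}(x)=\dfrac{d_C(x)^2}{2(t+s)}-\dfrac{d(y,x)^2}{2s}$. If $x\in M$ satisfies $\varphi_{t,s,y}(x)\ge\varphi_{t,s,y}(y)$, then $$d(x,y)\le\frac{2s}{t}d_C(y)\quad\text{and}\quad d_C(x)\le\Big(1+\frac{2s}{t}\Big)d_C(y).$$
   Context: $d$ is the Riemannian distance of $g$ and $d_C(x)=\inf_{c\in C}d(c,x)$. *)

From mathcomp Require Import all_boot all_order all_algebra.
From mathcomp Require Import all_classical all_reals.
Set Implicit Arguments. Unset Strict Implicit. Unset Printing Implicit Defensive.
Import Order.TTheory GRing.Theory Num.Theory.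
Local Open Scope ring_scope.
Local Open Scope classical_set_scope.

(* The Riemannian distance d of (M,g) is modelled as an abstract metric on M. *)
Record is_metric (R : realType) (T : Type) (d : T -> T -> R) : Prop := {
  metric_ge0 : forall x y, 0 <= d x y;
  metric_eq0 : forall x y, d x y = 0 <-> x = y;
  metric_sym : forall x y, d x y = d y x;
  metric_tri : forall x y z, d x z <= d x y + d y z }.

Definition metric_complete (R : realType) (T : Type) (d : T -> T -> R) : Prop :=
  forall u : nat -> T,
    (forall e : R, 0 < e -> exists N : nat, forall m n : nat,
        (N <= m)%N -> (N <= n)%N -> d (u m) (u n) < e) ->
    exists l : T, forall e : R, 0 < e -> exists N : nat, forall n : nat,
        (N <= n)%N -> d (u n) l < e.

Definition metric_closed (R : realType) (T : Type) (d : T -> T -> R) (C : set T) : Prop :=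
  forall x : T, (forall e : R, 0 < e -> exists c, C c /\ d c x < e) -> C x.

Definition distC (R : realType) (T : Type) (d : T -> T -> R) (C : set T) (x : T) : R :=
  inf [set d c x | c in C].

Definition phi (R : realType) (T : Type) (d : T -> T -> R) (C : set T)
    (t s : R) (y x : T) : R :=
  (distC d C x) ^+ 2 / (2 * (t + s)) - (d y x) ^+ 2 / (2 * s).

From mathcomp Require Import all_boot all_order all_algebra.
From mathcomp Require Import all_classical all_reals.
From mathcomp Require Import lra.
Set Implicit Arguments. Unset Strict Implicit. Unset Printing Implicit Defensive.
Import Order.TTheory GRing.Theory Num.Theory.
Local Open Scope ring_scope.
Local Open Scope classical_set_scope.

(* Write r = d(x,y), a = d_C(x), b = d_C(y).  Since d_C is 1-Lipschitz,
   a^2 - b^2 <= 2 b r + r^2, so the hypothesis phi(x) >= phi(y) gives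
   r^2/(2s) <= (2 b r + r^2)/(2(t+s)), i.e. t r^2 <= 2 s b r, whence
   r <= (2s/t) b; then a <= b + r <= (1 + 2s/t) b. *)

Section DistanceToSet.
Variables (R : realType) (M : Type) (d : M -> M -> R).
Hypothesis hd : is_metric d.
Variable C : set M.
Hypothesis hCne : C !=set0.

Lemma distC_ge0 (x : M) : 0 <= distC d C x.
Proof.
apply: lb_le_inf; first by have [c Cc] := hCne; exists (d c x), c.
by move=> _ [c _ <-]; exact: metric_ge0.
Qed.

Lemma distC_le_add_dist (x y : M) : distC d C x <= distC d C y + d x y.
Proof.
rewrite -lerBlDr; apply: lb_le_inf.
  by have [c Cc] := hCne; exists (d c y), c.
move=> _ [c Cc <-]; rewrite lerBlDr.
have distC_le : distC d C x <= d c x.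
  apply: ge_inf; last by exists c.
  by exists 0 => _ [c' _ <-]; exact: metric_ge0.
have := metric_tri hd c y x; rewrite (metric_sym hd y x); lra.
Qed.

End DistanceToSet.

Lemma dist_bound_of_phi_ge (F : realFieldType) (t s a b r : F) :
  0 < t -> 0 < s -> 0 <= b -> 0 <= r -> 0 <= a -> a <= b + r ->
  b ^+ 2 / (2 * (t + s)) <= a ^+ 2 / (2 * (t + s)) - r ^+ 2 / (2 * s) ->
  r * t <= 2 * s * b.
Proof.
move=> t_gt0 s_gt0 b_ge0 r_ge0 a_ge0 a_le H.
have ts_gt0 : 0 < 2 * (t + s) by lra.
have s2_gt0 : 0 < 2 * s by lra.
have cleared : r ^+ 2 * (2 * (t + s)) <= (a ^+ 2 - b ^+ 2) * (2 * s).
  have : r ^+ 2 / (2 * s) <= (a ^+ 2 - b ^+ 2) / (2 * (t + s)) by rewrite mulrBl; lra.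
  by rewrite ler_pdivrMr // mulrAC ler_pdivlMr.
have a_sq : a ^+ 2 <= (b + r) ^+ 2 by rewrite ler_sqr ?nnegrE //; lra.
have quad : r * (r * t) <= r * (2 * s * b) by rewrite sqrrD in a_sq; nra.
have [-> | r_neq0] := eqVneq r 0; first by rewrite mul0r; nra.
by move: quad; rewrite ler_pM2l // lt_neqAle eq_sym r_neq0.
Qed.

Theorem lemma7p1 (R : realType) (M : Type) (d : M -> M -> R)
  (hd : is_metric d) (hcompl : metric_complete d)
  (C : set M) (hC : metric_closed d C) (hCne : C !=set0)
  (t s : R) (ht : 0 < t) (hs : 0 < s) (y x : M)
  (hphi : phi d C t s y y <= phi d C t s y x) :
  d x y <= (2 * s / t) * distC d C y /\
  distC d C x <= (1 + 2 * s / t) * distC d C y.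
Proof.
have b_ge0 := distC_ge0 hd hCne y.
have a_le := distC_le_add_dist hd hCne x y.
have r_bound : d x y <= 2 * s / t * distC d C y.
  rewrite mulrAC ler_pdivlMr //.
  apply: (dist_bound_of_phi_ge ht hs b_ge0 (metric_ge0 hd x y) (distC_ge0 hd hCne x) a_le).
  move: hphi; rewrite /phi (metric_sym hd y x).
  have -> : d y y = 0 by apply/(metric_eq0 hd).
  by rewrite expr0n /= mul0r subr0.
split=> //; rewrite mulrDl mul1r; lra.
Qed.
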